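(* Let $Y$ be a connected, non-contractible $T_1$-space. Then $Y$ is not homotopy equivalent to any finite topological space. *)

From HB Require Import structures.
From mathcomp Require Import all_boot all_order all_algebra.
From mathcomp Require Import all_classical all_reals topology.
From mathcomp Require Import Rstruct Rstruct_topology.
From Stdlib Require Import Rdefinitions.

Set Implicit Arguments.
Unset Strict Implicit.
Unset Printing Implicit Defensive.

Local Open Scope classical_set_scope.
Local Open Scope ring_scope.

Definition unit_interval : Type := subspace (`[0%R, 1%R]%classic : set Rdefinitions.R).

Definition homotopic {X Y : topologicalType} (f g : X -> Y) : Prop :=
  exists H : unit_interval * X -> Y,
    continuous H /\
    (forall x : X, H (0%R : Rdefinitions.R, x) = f x) /\
    (forall x : X, H (1%R : Rdefinitions.R, x) = g x).

Definition homotopy_equivalent (X Y : topologicalType) : Prop :=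
  exists (f : X -> Y) (g : Y -> X),
    continuous f /\ continuous g /\
    homotopic (g \o f) idfun /\ homotopic (f \o g) idfun.

Definition contractible (X : topologicalType) : Prop :=
  exists x0 : X, homotopic (@idfun X) (fun _ : X => x0).

Definition connected_space (X : topologicalType) : Prop :=
  [set: X] !=set0 /\ connected [set: X].

Definition T1_space (X : topologicalType) : Prop := @accessible_space X.

Definition finite_space (X : topologicalType) : Prop := finite_set [set: X].

(* Continuous images of a connected space are connected, and in a T1 space a
   finite connected set is a point.  So if g : F -> Y and f : Y -> F form a
   homotopy equivalence with F finite, the self-map g \o f of Y has finite,
   connected range and is therefore constant; since it is homotopic to the
   identity, Y is contractible. *)
From HB Require Import structures.
From mathcomp Require Import all_boot all_order all_algebra.
From mathcomp Require Import all_classical all_reals topology normedtype.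
From mathcomp Require Import Rstruct Rstruct_topology.
From Stdlib Require Import Rdefinitions RIneq.

Set Implicit Arguments.
Unset Strict Implicit.
Unset Printing Implicit Defensive.
Import Order.TTheory GRing.Theory Num.Theory.
Local Open Scope classical_set_scope.
Local Open Scope ring_scope.

Lemma accessible_connected_finite_set1 (T : topologicalType) (A : set T) (x : T) :
  accessible_space T -> finite_set A -> connected A -> A x -> A = [set x].
Proof.
move=> T1 finA cA Ax.
have Ax_eq : [set x] = A `&` [set x] by apply/esym/setIidr => _ ->.
apply/esym/cA; first by exists x.
- exists (~` (A `\ x)); last first.
    by rewrite setCD setIUr setICr set0U.
  rewrite openC; move: T1; rewrite accessible_finite_set_closed; apply.
  exact: finite_setD.
- by exists [set x]; [exact: accessible_closed_set1 | exact: Ax_eq].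
Qed.

Lemma continuous_finite_range_cst (X Y : topologicalType) (h : X -> Y) (x0 : X) :
  connected [set: X] -> accessible_space Y -> continuous h ->
  finite_set (range h) -> forall x, h x = h x0.
Proof.
move=> cX T1 hc fin x.
have crange : connected (range h).
  by apply: connected_continuous_connected cX _; exact: continuous_subspaceT.
have range_h : range h = [set h x0].
  exact: accessible_connected_finite_set1 T1 fin crange (imageT h x0).
by move: (imageT h x); rewrite range_h.
Qed.

Definition unit_rev (t : Rdefinitions.R) : Rdefinitions.R := 1 - t.

Lemma unit_rev_fun : set_fun (`[0%R, 1%R]%classic : set Rdefinitions.R)
  (`[0%R, 1%R]%classic : set Rdefinitions.R) unit_rev.
Proof.
move=> t; rewrite /= !in_itv /= /unit_rev => /andP[t0 t1].
by apply/andP; split; [rewrite subr_ge0 | rewrite lerBlDr lerDl].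
Qed.

HB.instance Definition _ := isFun.Build _ _ _ _ unit_rev unit_rev_fun.

Lemma unit_rev_continuous : continuous (unit_rev : unit_interval -> unit_interval).
Proof.
have rev_cont : continuous unit_rev.
  move=> t; have -> : unit_rev = (fun _ => 1) - id by [].
  apply: (@continuousB _ Rdefinitions.R^o Rdefinitions.R (fun _ => 1) id).
    exact: cst_continuous.
  exact: cvg_id.
apply: subspaceT_continuous; apply: continuous_subspaceT => x.
exact: rev_cont.
Qed.

Lemma homotopic_sym (X Y : topologicalType) (f g : X -> Y) :
  homotopic f g -> homotopic g f.
Proof.
case=> H [Hc [H0 H1]].
exists (fun p : unit_interval * X => H (unit_rev p.1, p.2)); split; last first.
  split=> x /=; rewrite /unit_rev.
    by rewrite Rminus_0_r; exact: H1.
  by rewrite Rminus_diag; exact: H0.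
move=> p; apply: (@continuous_comp _ _ _
  (fun p : unit_interval * X => ((unit_rev p.1 : unit_interval), p.2)) H); last exact: Hc.
apply: cvg_pair; last exact: cvg_snd.
apply: (@continuous_comp _ _ _ fst (unit_rev : unit_interval -> unit_interval)).
  exact: cvg_fst.
exact: unit_rev_continuous.
Qed.

Theorem mainTheorem6 (Y : topologicalType) :
  connected_space Y -> T1_space Y -> ~ contractible Y ->
  forall F : topologicalType, finite_space F -> ~ homotopy_equivalent Y F.
Proof.
move=> [[y0 _] cY] T1 ncY F finF [f [g [fc [gc [hgf _]]]]].
have gfc : continuous (g \o f) by move=> y; exact: continuous_comp (fc y) (gc _).
have fin : finite_set (range (g \o f)).
  apply: sub_finite_set (finite_image g finF).
  by move=> _ [y _ <-]; exists (f y).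
have gf_cst : g \o f = (fun _ => g (f y0)).
  by apply: funext; exact: continuous_finite_range_cst cY T1 gfc fin.
by apply: ncY; exists (g (f y0)); apply: homotopic_sym; rewrite -gf_cst.
Qed.
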